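(* Let $T$ be a rooted binary phylogenetic tree (root of out-degree 2) with leaf set $X$, $|X|\ge 3$, and edge substitution probabilities $p_e\in[0,\tfrac12]$, under the $N_2$ model. Let $y,z\in X$ be two leaves forming a cherry with common parent $w$, and let $p_y,p_z$ be the substitution probabilities of the edges $(w,y)$ and $(w,z)$. Put $$\theta=(1-p_y)(1-p_z)+p_yp_z \quad(\text{the probability that } f(y)=f(z)),\qquad \pi=\frac{p_yp_z}{\theta}.$$ Then $\pi\le\min\{p_y,p_z\}$ and $$RA_{\rm MP}(T)=\theta\cdot RA_{\rm MP}(T'_\pi)+(1-\theta)\cdot RA_{\rm MP}(T'').$$
   Context: A rooted binary phylogenetic tree is a finite tree with a distinguished root vertex $\rho$, all edges directed away from $\rho$, in which $\rho$ has out-degree 2 (such a tree is written $T$) or out-degree 1 (written $\dot T$; the edge at $\rho$ is then called the stem edge), and every other vertex has in-degree 1 and out-degree 0 or 2; vertices of out-degree 0 are leaves, forming the leaf set $X$. Under the Neyman $r$-state model $N_r$ ($r\ge2$) on a state set $\mathcal A$ with $|\mathcal A|=r$, each edge $e$ carries a substitution probability $p_e\in[0,\frac{r-1}{r}]$; given the root state $F(\rho)$, states propagate independently along edges: for an edge $(u,v)$, $F(v)=F(u)$ with probability $1-p_e$, and otherwise $F(v)$ is uniform among the $r-1$ states different from $F(u)$. The character is $f=F|_X$. For a vertex $v$, $p(v)$ is the probability that $F(v)\neq F(\rho)$. Fitch sets: each leaf $x$ gets $\mathrm{FS}(x)=\{f(x)\}$; a vertex $v$ with children $v_1,v_2$ gets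 $\mathrm{FS}(v_1)\cap\mathrm{FS}(v_2)$ if this is nonempty and $\mathrm{FS}(v_1)\cup\mathrm{FS}(v_2)$ otherwise; a vertex with a single child gets the Fitch set of its child. $\mathrm{FS}(f,T)=\mathrm{FS}(\rho)$, and $\mathrm{MP}(f,T)$ is a state chosen uniformly at random from $\mathrm{FS}(f,T)$. The reconstruction accuracy of maximum parsimony is $RA_{\rm MP}(T)=\mathbb P(\mathrm{MP}(f,T)=\alpha\mid F(\rho)=\alpha)$ (independent of $\alpha$ by symmetry). Vertices of in-degree 1 and out-degree 1 may be suppressed (merging two consecutive edges into one with the composed substitution probability, which leaves the distribution of leaf states unchanged). The tree $T'_\pi$ is obtained from $T$ by deleting the leaves $y,z$ and their incident edges, attaching a new leaf $w'$ to $w$ via an edge $(w,w')$ with substitution probability $\pi$, and suppressing $w$. The tree $T''$ is obtained from $T$ by deleting $y$, $z$, $w$, and all edges incident to them (including the edge into $w$), and suppressing the resulting vertex of in- and out-degree 1 (if the parent of $w$ was the root, the result is a tree whose root has out-degree 1). *)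

From Stdlib Require Import Reals List.
Import ListNotations.
Open Scope R_scope.

(* Leaves are identified
   positionally.  [Node p1 t1 p2 t2] is a vertex with two children; the edge
   to the root of [t1] has substitution probability [p1], the edge to the
   root of [t2] has substitution probability [p2]. *)
Inductive tree : Type :=
| Leaf : tree
| Node : R -> tree -> R -> tree -> tree.

(* A whole rooted tree: either the root has out-degree 2 ([Rooted t] with
   the root being the top vertex of [t], a [Node]), or the root has
   out-degree 1 ([Planted p t]: stem edge with probability [p] to the top
   vertex of [t]). *)
Inductive rtree : Type :=
| Rooted : tree -> rtree
| Planted : R -> tree -> rtree.

Fixpoint nleaves (t : tree) : nat :=
  match t with
  | Leaf => 1%nat
  | Node _ t1 _ t2 => (nleaves t1 + nleaves t2)%nat
  end.

Fixpoint probs_ok (t : tree) : Prop :=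
  match t with
  | Leaf => True
  | Node p1 t1 p2 t2 =>
      0 <= p1 <= 1/2 /\ 0 <= p2 <= 1/2 /\ probs_ok t1 /\ probs_ok t2
  end.

(* N_2 transition probability along an edge with substitution probability p
   (with r = 2 the "other" state is unique, so it gets probability p/(r-1) = p). *)
Definition trans (p : R) (a b : bool) : R :=
  if Bool.eqb a b then 1 - p else p.

(* Composed substitution probability of two consecutive edges (N_2). *)
Definition comp (p q : R) : R := p * (1 - q) + (1 - p) * q.

(* Characters on the leaves, arranged along the tree shape. *)
Inductive chr : Type :=
| CLeaf : bool -> chr
| CNode : chr -> chr -> chr.

(* The list of all state assignments to the vertices strictly below / at a
   vertex with state [a] (one entry per assignment of states to the
   non-root vertices of the subtree), each with its probability (product of
   transition probabilities over the edges) and the induced leaf character. *)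
Fixpoint dist (a : bool) (t : tree) : list (R * chr) :=
  match t with
  | Leaf => [(1, CLeaf a)]
  | Node p1 t1 p2 t2 =>
      flat_map (fun b1 =>
        flat_map (fun b2 =>
          flat_map (fun wc1 =>
            map (fun wc2 =>
              (trans p1 a b1 * fst wc1 * (trans p2 a b2 * fst wc2),
               CNode (snd wc1) (snd wc2)))
              (dist b2 t2))
            (dist b1 t1))
          [true; false])
        [true; false]
  end.

Definition rdist (a : bool) (T : rtree) : list (R * chr) :=
  match T with
  | Rooted t => dist a t
  | Planted p t =>
      flat_map (fun b =>
        map (fun wc => (trans p a b * fst wc, snd wc)) (dist b t))
        [true; false]
  end.

Definition fset := bool -> bool.
Definition fs_nonempty (S : fset) : bool := orb (S true) (S false).
Definition fs_card (S : fset) : nat :=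
  ((if S true then 1 else 0) + (if S false then 1 else 0))%nat.

Fixpoint fitch (c : chr) : fset :=
  match c with
  | CLeaf b => fun x => Bool.eqb x b
  | CNode c1 c2 =>
      let S1 := fitch c1 in
      let S2 := fitch c2 in
      let I := fun x => andb (S1 x) (S2 x) in
      if fs_nonempty I then I else (fun x => orb (S1 x) (S2 x))
  end.
(* A vertex with a single child (stem root) gets its child's Fitch set, so
   the Fitch set of a character is [fitch c] for both kinds of rtree. *)

(* Probability that MP (uniform choice in the Fitch set) returns [a]. *)
Definition mp_prob (S : fset) (a : bool) : R :=
  if S a then / INR (fs_card S) else 0.

(* Reconstruction accuracy of maximum parsimony:
   P(MP(f,T) = a | F(rho) = a). *)
Definition RA_MP (a : bool) (T : rtree) : R :=
  fold_right Rplus 0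
    (map (fun wc => fst wc * mp_prob (fitch (snd wc)) a) (rdist a T)).

(* One-hole contexts: a tree with a distinguished vertex w (the hole);
   the innermost constructor records the parent u of w, the probability of
   the edge (u,w) and the sibling subtree of w. *)
Inductive ctx : Type :=
| HoleL : R -> R -> tree -> ctx     (* HoleL p q s : u = Node p [w] q s *)
| HoleR : R -> tree -> R -> ctx     (* HoleR q s p : u = Node q s p [w] *)
| InL : R -> ctx -> R -> tree -> ctx
| InR : R -> tree -> R -> ctx -> ctx.

Fixpoint plug (c : ctx) (w : tree) : tree :=
  match c with
  | HoleL p q s => Node p w q s
  | HoleR q s p => Node q s p w
  | InL p1 c' p2 t => Node p1 (plug c' w) p2 t
  | InR p1 t p2 c' => Node p1 t p2 (plug c' w)
  end.

Fixpoint ctx_ok (c : ctx) : Prop :=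
  match c with
  | HoleL p q s => 0 <= p <= 1/2 /\ 0 <= q <= 1/2 /\ probs_ok s
  | HoleR q s p => 0 <= p <= 1/2 /\ 0 <= q <= 1/2 /\ probs_ok s
  | InL p1 c' p2 t => 0 <= p1 <= 1/2 /\ 0 <= p2 <= 1/2 /\ ctx_ok c' /\ probs_ok t
  | InR p1 t p2 c' => 0 <= p1 <= 1/2 /\ 0 <= p2 <= 1/2 /\ probs_ok t /\ ctx_ok c'
  end.

(* T'_pi: replace the subtree at w by a single new leaf w' hanging from w via
   an edge with probability pi, then suppress w: the edge (u,w) with
   probability p and the edge (w,w') merge into one edge (u,w') with
   probability comp p pi. *)
Fixpoint plug_leaf_suppress (c : ctx) (pi : R) : tree :=
  match c with
  | HoleL p q s => Node (comp p pi) Leaf q s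
  | HoleR q s p => Node q s (comp p pi) Leaf
  | InL p1 c' p2 t => Node p1 (plug_leaf_suppress c' pi) p2 t
  | InR p1 t p2 c' => Node p1 t p2 (plug_leaf_suppress c' pi)
  end.

Definition T_prime (c : ctx) (pi : R) : rtree := Rooted (plug_leaf_suppress c pi).

(* T'': delete the subtree at w together with the edge (u,w); the parent u
   then has in- and out-degree 1 (if u is not the root) and is suppressed:
   the edge into u (probability r) and the edge from u to the sibling s
   (probability q) merge into an edge with probability comp r q.
   [delete_in r c] returns the new edge probability and subtree replacing
   (edge of probability r into the top of plug c _). *)
Fixpoint delete_in (r : R) (c : ctx) : R * tree :=
  match c with
  | HoleL p q s => (comp r q, s)
  | HoleR q s p => (comp r q, s)
  | InL p1 c' p2 t =>
      let (a, s) := delete_in p1 c' in (r, Node a s p2 t)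
  | InR p1 t p2 c' =>
      let (a, s) := delete_in p2 c' in (r, Node p1 t a s)
  end.

(* If u is the root, the result has a root of out-degree 1 (stem edge). *)
Definition T_dprime (c : ctx) : rtree :=
  match c with
  | HoleL p q s => Planted q s
  | HoleR q s p => Planted q s
  | InL p1 c' p2 t => let (a, s) := delete_in p1 c' in Rooted (Node a s p2 t)
  | InR p1 t p2 c' => let (a, s) := delete_in p2 c' in Rooted (Node p1 t a s)
  end.

(* Condition on the states of the two cherry leaves.  They agree with probability θ, and
   given agreement their common state is distributed as the state at the end of an edge of
   substitution probability π below w; composed with the edge into w this is the new leaf
   of T'_π.  Given disagreement the Fitch set at w is {0,1}, which is neutral for the Fitch
   merge because every Fitch set is nonempty, so the root Fitch set is computed as in T'',
   where the cherry is gone and its parent suppressed.  The accuracy of MP is an expectation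
   of a function of the root Fitch set, and both facts propagate from w to the root by
   induction on the position of w.  Finally π ≤ min{p_y, p_z} because θ ≥ max{p_y, p_z}
   when p_y, p_z ≤ 1/2. *)

From Stdlib Require Import Reals Lra Psatz List FunctionalExtensionality Setoid Morphisms.
Import ListNotations.
Open Scope R_scope.

Definition lsum {A : Type} (l : list A) (f : A -> R) : R :=
  fold_right Rplus 0 (map f l).

Lemma lsum_ext {A} (l : list A) f g : (forall x, f x = g x) -> lsum l f = lsum l g.
Proof. intros H. unfold lsum. f_equal. apply map_ext, H. Qed.

#[export] Instance lsum_proper {A} (l : list A) :
  Proper (pointwise_relation A eq ==> eq) (lsum l).
Proof. intros f g H. apply lsum_ext, H. Qed.

Lemma lsum_app {A} (l1 l2 : list A) f : lsum (l1 ++ l2) f = lsum l1 f + lsum l2 f.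
Proof.
  unfold lsum. induction l1 as [|x l1 IH]; cbn; [ring|]. rewrite IH. ring.
Qed.

Lemma lsum_flat_map {A B} (F : A -> list B) l f :
  lsum (flat_map F l) f = lsum l (fun x => lsum (F x) f).
Proof.
  induction l as [|x l IH]; [reflexivity|]. cbn [flat_map]. rewrite lsum_app, IH. reflexivity.
Qed.

Lemma lsum_map {A B} (G : A -> B) l f : lsum (map G l) f = lsum l (fun x => f (G x)).
Proof. unfold lsum. now rewrite map_map. Qed.

Lemma lsum_plus {A} (l : list A) f g : lsum l (fun x => f x + g x) = lsum l f + lsum l g.
Proof. unfold lsum. induction l as [|x l IH]; cbn; [ring|]. rewrite IH. ring. Qed.

Lemma lsum_scal {A} (l : list A) c f : lsum l (fun x => c * f x) = c * lsum l f.
Proof. unfold lsum. induction l as [|x l IH]; cbn; [ring|]. rewrite IH. ring. Qed.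

Lemma lsum_zero {A} (l : list A) : lsum l (fun _ => 0) = 0.
Proof. unfold lsum. induction l as [|x l IH]; cbn; [ring|]. rewrite IH. ring. Qed.

Lemma lsum_exchange {A B} (l1 : list A) (l2 : list B) f :
  lsum l1 (fun x => lsum l2 (fun y => f x y)) = lsum l2 (fun y => lsum l1 (fun x => f x y)).
Proof.
  induction l1 as [|x l1 IH]; cbn.
  - symmetry. apply lsum_zero.
  - unfold lsum in IH at 1. rewrite IH. symmetry. apply lsum_plus.
Qed.

Definition wsum {A : Type} (l : list (R * A)) (g : A -> R) : R :=
  lsum l (fun wc => fst wc * g (snd wc)).

#[export] Instance wsum_proper {A} (l : list (R * A)) :
  Proper (pointwise_relation A eq ==> eq) (wsum l).
Proof. intros f g H. unfold wsum. now setoid_rewrite H. Qed.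

Lemma wsum_exchange {A B} (l1 : list (R * A)) (l2 : list (R * B)) g :
  wsum l1 (fun x => wsum l2 (fun y => g x y)) = wsum l2 (fun y => wsum l1 (fun x => g x y)).
Proof.
  unfold wsum. setoid_rewrite <- lsum_scal. rewrite lsum_exchange.
  apply lsum_ext; intro wc2; apply lsum_ext; intro wc1. ring.
Qed.

Lemma wsum_leaf a g : wsum (dist a Leaf) g = g (CLeaf a).
Proof. unfold wsum, lsum; cbn. ring. Qed.

Lemma wsum_planted a p t g :
  wsum (rdist a (Planted p t)) g =
  trans p a true * wsum (dist true t) g + trans p a false * wsum (dist false t) g.
Proof.
  unfold wsum. cbn [rdist]. rewrite lsum_flat_map. unfold lsum at 1. cbn.
  rewrite !lsum_map, <- !lsum_scal. cbn. rewrite Rplus_0_r.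
  f_equal; apply lsum_ext; intro; ring.
Qed.

Lemma wsum_node a p1 t1 p2 t2 g :
  wsum (dist a (Node p1 t1 p2 t2)) g =
  wsum (rdist a (Planted p1 t1))
    (fun c1 => wsum (rdist a (Planted p2 t2)) (fun c2 => g (CNode c1 c2))).
Proof.
  unfold wsum. cbn [dist rdist].
  repeat setoid_rewrite lsum_flat_map. repeat setoid_rewrite lsum_map.
  cbn [fst snd]. repeat setoid_rewrite <- lsum_scal.
  apply lsum_ext; intro b1. rewrite lsum_exchange.
  apply lsum_ext; intro wc1. apply lsum_ext; intro b2. apply lsum_ext; intro wc2. ring.
Qed.

Lemma wsum_planted_0 a t g : wsum (rdist a (Planted 0 t)) g = wsum (dist a t) g.
Proof. rewrite wsum_planted. unfold trans. destruct a; cbn; ring. Qed.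

(* Chosen so that [fitch (CNode c1 c2)] is convertible to [fitch_merge (fitch c1) (fitch c2)]. *)
Definition fitch_merge (S1 S2 : fset) : fset :=
  let I := fun x => andb (S1 x) (S2 x) in
  if fs_nonempty I then I else (fun x => orb (S1 x) (S2 x)).

Definition fs_full : fset := fun _ => true.

Lemma fitch_merge_nonempty S1 S2 :
  fs_nonempty S1 = true -> fs_nonempty (fitch_merge S1 S2) = true.
Proof.
  intros H. unfold fitch_merge.
  destruct (fs_nonempty (fun x => andb (S1 x) (S2 x))) eqn:HI; [exact HI|].
  unfold fs_nonempty in *. cbn. destruct (S1 true), (S1 false), (S2 true), (S2 false); easy.
Qed.

Lemma fitch_nonempty c : fs_nonempty (fitch c) = true.
Proof.
  induction c as [[]|c1 IH1 c2 _]; [reflexivity | reflexivity |].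
  exact (fitch_merge_nonempty _ _ IH1).
Qed.

Lemma fitch_merge_full_l S : fs_nonempty S = true -> fitch_merge fs_full S = S.
Proof. intros H. unfold fitch_merge, fs_full, fs_nonempty in *. cbn. now rewrite H. Qed.

Lemma fitch_merge_full_r S : fs_nonempty S = true -> fitch_merge S fs_full = S.
Proof.
  intros H. unfold fitch_merge, fs_full, fs_nonempty in *.
  rewrite !Bool.andb_true_r, H.
  apply functional_extensionality; intros x; apply Bool.andb_true_r.
Qed.

Lemma fitch_cherry x y :
  fitch (CNode (CLeaf x) (CLeaf y)) = if Bool.eqb x y then fitch (CLeaf x) else fs_full.
Proof. apply functional_extensionality; intro z; now destruct x, y, z. Qed.

Definition fitch_expect (a : bool) (r : R) (t : tree) (h : fset -> R) : R :=
  wsum (rdist a (Planted r t)) (fun c => h (fitch c)).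

Lemma fitch_expect_node_l b p1 t1 p2 t2 h :
  wsum (dist b (Node p1 t1 p2 t2)) (fun c => h (fitch c)) =
  fitch_expect b p1 t1 (fun S1 => fitch_expect b p2 t2 (fun S2 => h (fitch_merge S1 S2))).
Proof. apply wsum_node. Qed.

Lemma fitch_expect_node_r b p1 t1 p2 t2 h :
  wsum (dist b (Node p1 t1 p2 t2)) (fun c => h (fitch c)) =
  fitch_expect b p2 t2 (fun S2 => fitch_expect b p1 t1 (fun S1 => h (fitch_merge S1 S2))).
Proof. rewrite fitch_expect_node_l. apply wsum_exchange. Qed.

Lemma fitch_expect_full_l a r t h :
  fitch_expect a r t (fun S => h (fitch_merge fs_full S)) = fitch_expect a r t h.
Proof.
  unfold fitch_expect. apply wsum_proper; intro c.
  now rewrite fitch_merge_full_l by apply fitch_nonempty.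
Qed.

Lemma fitch_expect_full_r a r t h :
  fitch_expect a r t (fun S => h (fitch_merge S fs_full)) = fitch_expect a r t h.
Proof.
  unfold fitch_expect. apply wsum_proper; intro c.
  now rewrite fitch_merge_full_r by apply fitch_nonempty.
Qed.

Lemma fitch_expect_comp a r q t h :
  trans r a true * fitch_expect true q t h + trans r a false * fitch_expect false q t h
  = fitch_expect a (comp r q) t h.
Proof.
  unfold fitch_expect. rewrite !wsum_planted. unfold trans, comp. destruct a; cbn; ring.
Qed.

Definition agree_prob (py pz : R) : R := (1 - py) * (1 - pz) + py * pz.
Definition cherry_pi (py pz : R) : R := py * pz / agree_prob py pz.

Lemma agree_prob_pos py pz :
  0 <= py <= 1/2 -> 0 <= pz <= 1/2 -> 0 < agree_prob py pz.
Proof. unfold agree_prob. nra. Qed.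

Lemma cherry_pi_le_min py pz :
  0 <= py <= 1/2 -> 0 <= pz <= 1/2 -> cherry_pi py pz <= Rmin py pz.
Proof.
  intros Hy Hz. pose proof (agree_prob_pos py pz Hy Hz) as Hth.
  assert (Hpy : py <= agree_prob py pz) by (unfold agree_prob; nra).
  assert (Hpz : pz <= agree_prob py pz) by (unfold agree_prob; nra).
  unfold cherry_pi. apply Rmin_glb; apply Rmult_le_reg_r with (agree_prob py pz); trivial;
    unfold Rdiv; rewrite Rmult_assoc, Rinv_l, Rmult_1_r by lra; nra.
Qed.

Lemma fitch_expect_cherry py pz b p k :
  agree_prob py pz <> 0 ->
  fitch_expect b p (Node py Leaf pz Leaf) k =
  agree_prob py pz * fitch_expect b (comp p (cherry_pi py pz)) Leaf k
  + (1 - agree_prob py pz) * k fs_full.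
Proof.
  intros Hth. unfold fitch_expect.
  rewrite !wsum_planted, !wsum_node, !wsum_planted, !wsum_leaf, !wsum_planted, !wsum_leaf,
    !fitch_cherry; cbn [Bool.eqb].
  unfold cherry_pi, agree_prob, trans, comp in *. destruct b; cbn; field; exact Hth.
Qed.

Lemma fitch_expect_plug py pz c :
  agree_prob py pz <> 0 ->
  forall a r h,
  fitch_expect a r (plug c (Node py Leaf pz Leaf)) h =
  agree_prob py pz * fitch_expect a r (plug_leaf_suppress c (cherry_pi py pz)) h
  + (1 - agree_prob py pz) * fitch_expect a (fst (delete_in r c)) (snd (delete_in r c)) h.
Proof.
  intros Hth.
  induction c as [p q s|q s p|p1 c' IH p2 t|p1 t p2 c' IH]; intros a r h;
    cbn [plug plug_leaf_suppress delete_in fst snd].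
  - unfold fitch_expect at 1 2.
    rewrite !wsum_planted, !fitch_expect_node_l, !fitch_expect_cherry, !fitch_expect_full_l
      by exact Hth.
    rewrite <- (fitch_expect_comp a r q s h). ring.
  - unfold fitch_expect at 1 2.
    rewrite !wsum_planted, !fitch_expect_node_r, !fitch_expect_cherry, !fitch_expect_full_r
      by exact Hth.
    rewrite <- (fitch_expect_comp a r q s h). ring.
  - destruct (delete_in p1 c') as [a' s] eqn:Hd. cbn [fst snd].
    unfold fitch_expect at 1 2 3.
    rewrite !wsum_planted, !fitch_expect_node_l, !IH, Hd. cbn [fst snd]. ring.
  - destruct (delete_in p2 c') as [a' s] eqn:Hd. cbn [fst snd].
    unfold fitch_expect at 1 2 3.
    rewrite !wsum_planted, !fitch_expect_node_r, !IH, Hd. cbn [fst snd]. ring.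
Qed.

Lemma RA_MP_rooted a t : RA_MP a (Rooted t) = fitch_expect a 0 t (fun S => mp_prob S a).
Proof. unfold fitch_expect. now rewrite wsum_planted_0. Qed.

Lemma RA_MP_T_dprime a c :
  RA_MP a (T_dprime c) =
  fitch_expect a (fst (delete_in 0 c)) (snd (delete_in 0 c)) (fun S => mp_prob S a).
Proof.
  assert (comp_0_l : forall q, comp 0 q = q) by (intros; unfold comp; ring).
  destruct c as [p q s|q s p|p1 c' p2 t|p1 t p2 c']; cbn [T_dprime delete_in].
  - now rewrite comp_0_l.
  - now rewrite comp_0_l.
  - destruct (delete_in p1 c'). apply RA_MP_rooted.
  - destruct (delete_in p2 c'). apply RA_MP_rooted.
Qed.

Theorem theorem1 (c : ctx) (py pz : R) (alpha : bool) :
  ctx_ok c ->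
  0 <= py <= 1/2 -> 0 <= pz <= 1/2 ->
  (3 <= nleaves (plug c (Node py Leaf pz Leaf)))%nat ->
  let theta := (1 - py) * (1 - pz) + py * pz in
  let pi := py * pz / theta in
  pi <= Rmin py pz /\
  RA_MP alpha (Rooted (plug c (Node py Leaf pz Leaf))) =
    theta * RA_MP alpha (T_prime c pi) + (1 - theta) * RA_MP alpha (T_dprime c).
Proof.
  intros _ Hy Hz _ theta pi. split.
  - exact (cherry_pi_le_min py pz Hy Hz).
  - unfold T_prime. rewrite RA_MP_T_dprime, !RA_MP_rooted.
    apply fitch_expect_plug, Rgt_not_eq, agree_prob_pos; assumption.
Qed.
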